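(* Let $A\in\mathbb{R}^{n\times n}$ be symmetric positive semidefinite and $b\in\mathbb{R}^n$. Apply the $CD$ method (described in the context) to $Ay=b$ with starting point $y_0\in\mathbb{R}^n$ and real parameters $\gamma_i\neq0$, and assume it runs without breakdown (all denominators nonzero) and produces $y_0,\dots,y_{m+1}$, $r_0,\dots,r_m$ (all nonzero) and $p_0,\dots,p_m$, with $m+1\le n$ and $Ay_{m+1}=b$. Let $y^\ast$ be any solution of $Ay=b$, let $f(y)=\tfrac12(y-y^\ast)^TA(y-y^\ast)$, and for $i\in\{1,\dots,m\}$ let $g_i(y)=\tfrac12(y-y_i)^TA(y-y_i)$. Then: (1) the minimum of $g_1$ over the line $\{y_1+\gamma_0Ap_0+tp_0:\ t\in\mathbb{R}\}$ is attained at $t=-\sigma_0$; (2) for each $i=2,\dots,m$, the minimum of $g_i$ over the two-dimensional affine set $\{y_i+\gamma_{i-1}Ap_{i-1}+sp_{i-1}+tp_{i-2}:\ s,t\in\mathbb{R}\}$ is attained at $(s,t)=(-\sigma_{i-1},-\omega_{i-1})$; (3) for $i=1,\dots,m$, $$f(y_i+a_ip_i)=f(y_i)-\frac12\left(\frac{\gamma_{i-1}}{a_{i-1}}\right)^2\frac{\|r_i\|^4}{p_i^TAp_i};$$ (4) with $A^+$ the Moore–Penrose pseudoinverse of $A$, $$\left[A^+-\sum_{i=0}^m\frac{p_ip_i^T}{p_i^TAp_i}\right]r_0=0.$$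
   Context: The $CD$ method for solving $Ay=b$, with starting point $y_0\in\mathbb{R}^n$ and nonzero real parameters $\gamma_0,\gamma_1,\dots$, is the following iteration (all norms Euclidean). Set $r_0=b-Ay_0$; if $r_0=0$ stop; set $p_0=r_0$. For $k=0,1,2,\dots$: compute $a_k=\dfrac{r_k^Tp_k}{p_k^TAp_k}$, $y_{k+1}=y_k+a_kp_k$, $r_{k+1}=r_k-a_kAp_k$; if $r_{k+1}=0$ stop; otherwise set $\sigma_k=\gamma_k\dfrac{\|Ap_k\|^2}{p_k^TAp_k}$ and, if $k=0$, $p_1=\gamma_0Ap_0-\sigma_0p_0$, while if $k\ge1$, $\omega_k=\gamma_k\dfrac{(Ap_k)^T(Ap_{k-1})}{p_{k-1}^TAp_{k-1}}$ and $p_{k+1}=\gamma_kAp_k-\sigma_kp_k-\omega_kp_{k-1}$. *)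

From HB Require Import structures.
From mathcomp Require Import all_boot all_order all_algebra.
From mathcomp Require Import reals.
Set Implicit Arguments. Unset Strict Implicit. Unset Printing Implicit Defensive.
Import Order.TTheory GRing.Theory Num.Theory.
Local Open Scope ring_scope.

Section CD.
Variables (R : realType) (n : nat).

Definition dotv (x y : 'cV[R]_n) : R := (x^T *m y) 0 0.
Definition normv (x : 'cV[R]_n) : R := Num.sqrt (dotv x x).

Definition sym_psd (A : 'M[R]_n) : Prop :=
  A^T = A /\ forall x : 'cV[R]_n, 0 <= dotv x (A *m x).

(* X is the Moore--Penrose pseudoinverse of A (the four Penrose equations,
   which determine it uniquely) *)
Definition is_MP_pinv (A X : 'M[R]_n) : Prop :=
  [/\ A *m X *m A = A, X *m A *m X = X,
      (A *m X)^T = A *m X & (X *m A)^T = X *m A].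

Definition cd_a (A : 'M[R]_n) (r p : nat -> 'cV[R]_n) (k : nat) : R :=
  dotv (r k) (p k) / dotv (p k) (A *m p k).
Definition cd_sigma (A : 'M[R]_n) (gamma : nat -> R) (p : nat -> 'cV[R]_n)
  (k : nat) : R :=
  gamma k * dotv (A *m p k) (A *m p k) / dotv (p k) (A *m p k).
Definition cd_omega (A : 'M[R]_n) (gamma : nat -> R) (p : nat -> 'cV[R]_n)
  (k : nat) : R :=
  gamma k * dotv (A *m p k) (A *m p k.-1) / dotv (p k.-1) (A *m p k.-1).

Definition CD_run (A : 'M[R]_n) (b : 'cV[R]_n) (gamma : nat -> R)
  (y r p : nat -> 'cV[R]_n) (m : nat) : Prop :=
  r 0%N = b - A *m y 0%N /\
  p 0%N = r 0%N /\
  (forall k, (k <= m)%N -> r k != 0) /\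
  (forall k, (k <= m)%N -> dotv (p k) (A *m p k) != 0) /\
  (forall k, (k <= m)%N -> y k.+1 = y k + cd_a A r p k *: p k) /\
  (forall k, (k < m)%N -> r k.+1 = r k - cd_a A r p k *: (A *m p k)) /\
      ((0 < m)%N -> p 1%N = gamma 0%N *: (A *m p 0%N)
                              - cd_sigma A gamma p 0%N *: p 0%N) /\
      (forall k, (1 <= k)%N -> (k < m)%N ->
         p k.+1 = gamma k *: (A *m p k) - cd_sigma A gamma p k *: p k
                  - cd_omega A gamma p k *: p k.-1) /\
  A *m y m.+1 = b.

End CD.

From HB Require Import structures.
From mathcomp Require Import all_boot all_order all_algebra.
From mathcomp Require Import reals ring lra zify.
Import Order.TTheory GRing.Theory Num.Theory.
Set Implicit Arguments. Unset Strict Implicit.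
Local Open Scope ring_scope.

(* The search directions are mutually A-conjugate: sigma_k and omega_k are
   exactly the coefficients making p_(k+1) A-orthogonal to p_k and p_(k-1),
   and orthogonality to the earlier p_i is inherited through the three-term
   recurrence.  It follows that r_k is orthogonal to p_0, ..., p_(k-1).
   (1), (2): the proposed minimiser minus y_i is p_i, and moving inside the
   line or plane adds a combination of p_(i-1), p_(i-2), which is A-orthogonal
   to p_i, so the quadratic can only grow.
   (3): exact line search along p_i lowers f by (p_i^T r_i)^2 / (2 p_i^T A p_i),
   and p_i^T r_i = - (gamma_(i-1) / a_(i-1)) ||r_i||^2.
   (4): A^+ A fixes the range of A, which contains every p_i, so
   A^+ r_0 = A^+ A (y_(m+1) - y_0) = sum_i a_i p_i, while by orthogonality
   a_i = p_i^T r_0 / p_i^T A p_i. *)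

Section InnerProduct.
Variables (R : realType) (n : nat).
Implicit Types (x y z : 'cV[R]_n) (A X : 'M[R]_n).

Lemma dotvE x y : dotv x y = \sum_i x i 0 * y i 0.
Proof. by rewrite /dotv !mxE; apply: eq_bigr => i _; rewrite mxE. Qed.

Lemma dotvC x y : dotv x y = dotv y x.
Proof. by rewrite !dotvE; apply: eq_bigr => i _; rewrite mulrC. Qed.

Lemma dotvDl x y z : dotv (x + y) z = dotv x z + dotv y z.
Proof. by rewrite !dotvE -big_split; apply: eq_bigr => i _; rewrite mxE mulrDl. Qed.

Lemma dotvDr x y z : dotv z (x + y) = dotv z x + dotv z y.
Proof. by rewrite dotvC dotvDl !(dotvC z). Qed.

Lemma dotvZl (c : R) x y : dotv (c *: x) y = c * dotv x y.
Proof. by rewrite !dotvE mulr_sumr; apply: eq_bigr => i _; rewrite mxE mulrA. Qed.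

Lemma dotvZr (c : R) x y : dotv y (c *: x) = c * dotv y x.
Proof. by rewrite dotvC dotvZl dotvC. Qed.

Lemma dotvNl x y : dotv (- x) y = - dotv x y.
Proof. by rewrite -scaleN1r dotvZl mulN1r. Qed.

Lemma dotvNr x y : dotv y (- x) = - dotv y x.
Proof. by rewrite -scaleN1r dotvZr mulN1r. Qed.

Lemma dotvBl x y z : dotv (x - y) z = dotv x z - dotv y z.
Proof. by rewrite dotvDl dotvNl. Qed.

Lemma dotvBr x y z : dotv z (x - y) = dotv z x - dotv z y.
Proof. by rewrite dotvDr dotvNr. Qed.

Lemma dotv_symmx A x y : A^T = A -> dotv x (A *m y) = dotv (A *m x) y.
Proof. by move=> symA; rewrite /dotv mulmxA trmx_mul symA. Qed.

Lemma dotvv_ge0 x : 0 <= dotv x x.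
Proof. by rewrite dotvE; apply: sumr_ge0 => i _; rewrite -expr2 sqr_ge0. Qed.

Lemma dotvv_eq0 x : (dotv x x == 0) = (x == 0).
Proof.
apply/idP/eqP => [|->]; last by rewrite dotvE big1 // => i _; rewrite mxE mul0r.
rewrite dotvE psumr_eq0 => [/allP x0|i _]; last by rewrite -expr2 sqr_ge0.
apply/matrixP => i j; rewrite ord1 mxE.
by have := x0 i (mem_index_enum i); rewrite /= -expr2 sqrf_eq0 => /eqP.
Qed.

Lemma normv4 x : normv x ^+ 4 = dotv x x ^+ 2.
Proof. by rewrite /normv (_ : 4 = 2 * 2)%N // exprM sqr_sqrtr // dotvv_ge0. Qed.

Lemma trmx_mul_dotv x y : x^T *m y = (dotv x y)%:M.
Proof. by apply/matrixP => i j; rewrite !ord1 [RHS]mxE eqxx mulr1n. Qed.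

(* The paper's [f] is [energy A ystar] and its [g_i] is [energy A (y i)]. *)
Definition energy A (c z : 'cV[R]_n) : R := 2^-1 * dotv (z - c) (A *m (z - c)).

Lemma energy_le_orth A c z w : sym_psd A -> dotv (z - c) (A *m (w - z)) = 0 ->
  energy A c z <= energy A c w.
Proof.
move=> [symA psdA] orth; rewrite /energy ler_wpM2l ?invr_ge0 ?ler0n //.
have -> : w - c = (z - c) + (w - z) by rewrite [RHS]addrC addrA subrK.
move: (z - c) (w - z) orth => x v orth.
rewrite mulmxDr !dotvDl !dotvDr orth (dotv_symmx v) // (dotvC (A *m v)) orth.
by have := psdA v; lra.
Qed.

Lemma energy_line_search A c z v (t : R) : A^T = A -> dotv v (A *m v) != 0 ->
  t = dotv v (A *m (c - z)) / dotv v (A *m v) ->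
  energy A c (z + t *: v)
  = energy A c z - 2^-1 * dotv v (A *m (c - z)) ^+ 2 / dotv v (A *m v).
Proof.
move=> symA vAv_neq0 ->; rewrite /energy addrAC -opprB.
move: (c - z) => x; rewrite mulmxDr mulmxN -scalemxAr.
rewrite !dotvDl !dotvDr !dotvNl !dotvNr !dotvZl !dotvZr opprK.
rewrite (dotv_symmx x v) // (dotvC (A *m x) v).
by field.
Qed.

Lemma pinv_mulmxAA A X : A^T = A -> is_MP_pinv A X -> X *m A *m A = A.
Proof.
move=> symA [AXA _ _ XAsym]; rewrite -XAsym trmx_mul symA.
by have := congr1 trmx AXA; rewrite !trmx_mul symA mulmxA.
Qed.

End InnerProduct.

(* The convention [omega_0 = 0] makes the formula for [p_1] an instance of
   the three-term recurrence for [p_(k+1)]. *)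
Definition cd_omega0 (R : realType) (n : nat) (A : 'M[R]_n) (gamma : nat -> R)
  (p : nat -> 'cV[R]_n) (k : nat) : R :=
  if k is _.+1 then cd_omega A gamma p k else 0.

Section CDRun.
Variables (R : realType) (n m : nat) (A : 'M[R]_n) (b : 'cV[R]_n).
Variables (gamma : nat -> R) (y r p : nat -> 'cV[R]_n).

Local Notation a := (cd_a A r p).
Local Notation sigma := (cd_sigma A gamma p).
Local Notation omega := (cd_omega A gamma p).
Local Notation omega0 := (cd_omega0 A gamma p).

Hypothesis psdA : sym_psd A.
Let symA : A^T = A := psdA.1.
Hypothesis gamma_neq0 : forall k, gamma k != 0.
Hypothesis run : CD_run A b gamma y r p m.

Let r0E : r 0 = b - A *m y 0 := run.1.
Let p0E : p 0 = r 0 := run.2.1.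
Let r_neq0 : forall k, (k <= m)%N -> r k != 0 := run.2.2.1.
Let pAp_neq0 : forall k, (k <= m)%N -> dotv (p k) (A *m p k) != 0 := run.2.2.2.1.
Let yS : forall k, (k <= m)%N -> y k.+1 = y k + a k *: p k := run.2.2.2.2.1.
Let rS : forall k, (k < m)%N -> r k.+1 = r k - a k *: (A *m p k) :=
  run.2.2.2.2.2.1.
Let p1E : (0 < m)%N -> p 1 = gamma 0 *: (A *m p 0) - sigma 0 *: p 0 :=
  run.2.2.2.2.2.2.1.
Let pS : forall k, (1 <= k)%N -> (k < m)%N ->
  p k.+1 = gamma k *: (A *m p k) - sigma k *: p k - omega k *: p k.-1 :=
  run.2.2.2.2.2.2.2.1.
Let yE : A *m y m.+1 = b := run.2.2.2.2.2.2.2.2.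

Lemma p_rec k : (k < m)%N ->
  p k.+1 = gamma k *: (A *m p k) - sigma k *: p k - omega0 k *: p k.-1.
Proof. by case: k => [|k] lt_km; [rewrite scale0r subr0 p1E | exact: pS]. Qed.

Lemma Ap_rec k : (k < m)%N ->
  A *m p k = (gamma k)^-1 *: (p k.+1 + sigma k *: p k + omega0 k *: p k.-1).
Proof.
move=> lt_km; rewrite p_rec //; apply/matrixP => i j; rewrite !mxE.
by field; apply: gamma_neq0.
Qed.

(* [sigma_k] and [omega_k] are chosen to make [p_(k+1)] [A]-orthogonal to
   [p_k] and [p_(k-1)]; for [i < k - 1] orthogonality to [p_i] comes for free
   because [A p_i] lies in the span of [p_(i-1)], [p_i], [p_(i+1)]. *)
Lemma p_conjugate_lt j : (j <= m)%N -> forall i, (i < j)%N ->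
  dotv (p i) (A *m p j) = 0.
Proof.
elim/ltn_ind: j => -[//|k] IH le_km i; rewrite ltnS => le_ik.
have IHk i' : (i' < k)%N -> dotv (p i') (A *m p k) = 0 by apply: IH => //; lia.
rewrite p_rec // !mulmxBr -!scalemxAr !dotvBr !dotvZr.
move: le_ik; rewrite leq_eqVlt => /predU1P [-> {i}|lt_ik].
  have -> : omega0 k * dotv (p k) (A *m p k.-1) = 0.
    case: k {IH} le_km IHk => [|k] le_km IHk; first by rewrite mul0r.
    by rewrite dotv_symmx // dotvC IHk ?mulr0.
  by rewrite dotv_symmx // /cd_sigma; field; apply: pAp_neq0; exact: ltnW.
rewrite IHk // mulr0 subr0.
move: lt_ik; rewrite leq_eqVlt => /predU1P [ik|lt_i1k].
  case: k {IH} le_km IHk ik => // k le_km IHk [->] /=.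
  by rewrite dotv_symmx // /cd_omega /= dotvC; field; apply: pAp_neq0; lia.
rewrite (IH k.-1) ?mulr0 ?subr0; try lia.
rewrite dotv_symmx // Ap_rec; last lia.
by rewrite dotvZl !dotvDl !dotvZl !IHk ?(mulr0, addr0) //; lia.
Qed.

Lemma p_conjugate i j : (i <= m)%N -> (j <= m)%N -> i != j ->
  dotv (p i) (A *m p j) = 0.
Proof.
move=> le_im le_jm; rewrite neq_ltn => /orP [lt_ij|lt_ji].
  exact: p_conjugate_lt.
by rewrite dotv_symmx // dotvC p_conjugate_lt.
Qed.

Lemma r_residual k : (k <= m)%N -> r k = b - A *m y k.
Proof.
elim: k => [//|k IH] lt_km.
rewrite rS // yS ?(ltnW lt_km) // IH ?(ltnW lt_km) // mulmxDr -scalemxAr.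
by rewrite opprD addrA.
Qed.

Lemma p_r_orth k : (k <= m)%N -> forall j, (j < k)%N -> dotv (p j) (r k) = 0.
Proof.
elim: k => [//|k IH] lt_km j; rewrite rS // dotvBr dotvZr ltnS leq_eqVlt.
case/predU1P => [-> | lt_jk].
  by rewrite /cd_a dotvC; field; apply: pAp_neq0; exact: ltnW.
by rewrite IH ?(ltnW lt_km) // p_conjugate ?mulr0 ?subr0 //; lia.
Qed.

(* [r_k] lies in the span of [p_0, ..., p_k]. *)
Lemma r_orth k v : (k <= m)%N ->
  (forall j, (j <= k)%N -> dotv (p j) v = 0) -> dotv (r k) v = 0.
Proof.
elim: k => [|k IH] le_km v_orth; first by rewrite -p0E v_orth.
rewrite rS // dotvBl dotvZl IH ?(ltnW le_km) => [||j le_jk] //; last first.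
  by apply: v_orth; exact: leqW.
rewrite Ap_rec // !dotvZl !dotvDl !dotvZl !v_orth ?(mulr0, addr0, subr0) //; lia.
Qed.

Lemma dot_p_r0 j k : (j <= k)%N -> (k <= m)%N -> dotv (p k) (r j) = dotv (p k) (r 0).
Proof.
elim: j => [//|j IH] lt_jk le_km.
rewrite rS; last lia.
by rewrite dotvBr dotvZr p_conjugate ?mulr0 ?subr0 ?IH //; lia.
Qed.

Lemma a_dot_p_r k : (k < m)%N ->
  a k * dotv (p k.+1) (r k.+1) = - gamma k * dotv (r k.+1) (r k.+1).
Proof.
move=> lt_km.
have rr : dotv (r k.+1) (r k.+1) = - a k * dotv (A *m p k) (r k.+1).
  rewrite {1}rS // dotvBl dotvZl r_orth ?(ltnW lt_km) => [||j le_jk] //; first ring.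
  exact: p_r_orth.
rewrite rr p_rec // !dotvBl !dotvZl !p_r_orth //; try lia.
ring.
Qed.

Lemma a_neq0 k : (k <= m)%N -> a k != 0.
Proof.
case: k => [|k] le_km; rewrite /cd_a mulf_neq0 ?invr_neq0 ?pAp_neq0 //.
  by rewrite p0E dotvv_eq0 r_neq0.
apply/eqP => pr0; have := a_dot_p_r le_km.
rewrite dotvC pr0 mulr0 => /esym/eqP.
by rewrite mulf_eq0 oppr_eq0 (negbTE (gamma_neq0 k)) dotvv_eq0 (negbTE (r_neq0 _)).
Qed.

Lemma dot_p_r k : (k < m)%N ->
  dotv (p k.+1) (r k.+1) = - gamma k / a k * dotv (r k.+1) (r k.+1).
Proof.
move=> lt_km; have ak_neq0 := a_neq0 (ltnW lt_km).
by apply: (mulfI ak_neq0); rewrite a_dot_p_r //; field.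
Qed.

Lemma y_telescope k : (k <= m)%N -> \sum_(i < k.+1) a i *: p i = y k.+1 - y 0.
Proof.
elim: k => [|k IH] le_km; first by rewrite big_ord1 yS // addrAC subrr add0r.
by rewrite big_ord_recr /= IH ?(ltnW le_km) // (yS le_km) addrAC.
Qed.

Lemma pinv_fixes_p X : X *m A *m A = A -> forall k, (k <= m)%N ->
  X *m A *m p k = p k.
Proof.
move=> XAA k; elim/ltn_ind: k => -[_ _|k IH le_km].
  by rewrite p0E r0E -yE -mulmxBr mulmxA XAA.
by rewrite p_rec // !mulmxBr -!scalemxAr !mulmxA XAA !IH //; lia.
Qed.

Lemma cd_line_min : (0 < m)%N -> forall t : R,
  energy A (y 1) (y 1 + gamma 0 *: (A *m p 0) - sigma 0 *: p 0)
  <= energy A (y 1) (y 1 + gamma 0 *: (A *m p 0) + t *: p 0).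
Proof.
move=> m_gt0 t; apply: energy_le_orth => //.
have -> : y 1 + gamma 0 *: (A *m p 0) - sigma 0 *: p 0 - y 1 = p 1.
  by rewrite p1E //; apply/matrixP => i j; rewrite !mxE; ring.
have -> : y 1 + gamma 0 *: (A *m p 0) + t *: p 0
          - (y 1 + gamma 0 *: (A *m p 0) - sigma 0 *: p 0) = (t + sigma 0) *: p 0.
  by apply/matrixP => i j; rewrite !mxE; ring.
by rewrite -scalemxAr dotvZr p_conjugate ?mulr0.
Qed.

Lemma cd_plane_min i : (2 <= i)%N -> (i <= m)%N -> forall s t : R,
  energy A (y i) (y i + gamma i.-1 *: (A *m p i.-1)
                   - sigma i.-1 *: p i.-1 - omega i.-1 *: p i.-2)
  <= energy A (y i) (y i + gamma i.-1 *: (A *m p i.-1)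
                      + s *: p i.-1 + t *: p i.-2).
Proof.
case: i => [|[|k]] //= _ lt_km s t; apply: energy_le_orth => //.
have -> : y k.+2 + gamma k.+1 *: (A *m p k.+1) - sigma k.+1 *: p k.+1
          - omega k.+1 *: p k - y k.+2 = p k.+2.
  by rewrite [in RHS]pS //; apply/matrixP => i j; rewrite !mxE; ring.
have -> : y k.+2 + gamma k.+1 *: (A *m p k.+1) + s *: p k.+1 + t *: p k
          - (y k.+2 + gamma k.+1 *: (A *m p k.+1) - sigma k.+1 *: p k.+1
             - omega k.+1 *: p k)
          = (s + sigma k.+1) *: p k.+1 + (t + omega k.+1) *: p k.
  by apply/matrixP => i j; rewrite !mxE; ring.
by rewrite mulmxDr -!scalemxAr dotvDr !dotvZr !p_conjugate ?mulr0 ?addr0 //; lia.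
Qed.

Variable ystar : 'cV[R]_n.
Hypothesis ystarE : A *m ystar = b.

Lemma cd_energy_decrease i : (1 <= i)%N -> (i <= m)%N ->
  energy A ystar (y i + a i *: p i)
  = energy A ystar (y i) - 2^-1 * (gamma i.-1 / a i.-1) ^+ 2
                           * normv (r i) ^+ 4 / dotv (p i) (A *m p i).
Proof.
case: i => [|k] // _ lt_km /=.
have Ar : A *m (ystar - y k.+1) = r k.+1 by rewrite mulmxBr ystarE r_residual.
rewrite (energy_line_search (t := a k.+1)) ?pAp_neq0 // ?Ar //.
  rewrite dot_p_r // normv4; field.
  by rewrite a_neq0 ?pAp_neq0 //; exact: ltnW.
by rewrite /cd_a dotvC.
Qed.

Lemma cd_pinv_r0 X : is_MP_pinv A X ->
  (X - \sum_(i < m.+1) (dotv (p i) (A *m p i))^-1 *: (p i *m (p i)^T)) *m r 0 = 0.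
Proof.
move=> pinvX; have XAA := pinv_mulmxAA symA pinvX.
rewrite mulmxBl mulmx_suml; apply/eqP; rewrite subr_eq0; apply/eqP.
transitivity (\sum_(i < m.+1) a i *: p i).
  rewrite r0E -yE -mulmxBr -y_telescope // mulmxA mulmx_sumr.
  apply: eq_bigr => i _.
  by rewrite -scalemxAr (pinv_fixes_p XAA (ltn_ord i)).
apply: eq_bigr => i _.
rewrite -scalemxAl -mulmxA trmx_mul_dotv mul_mx_scalar scalerA.
by rewrite -(dot_p_r0 (leqnn i) (ltn_ord i)) /cd_a (dotvC (p i) (r i)) mulrC.
Qed.

End CDRun.

Theorem theorem3 (R : realType) (n m : nat) (A : 'M[R]_n) (b : 'cV[R]_n)
  (gamma : nat -> R) (y r p : nat -> 'cV[R]_n) (ystar : 'cV[R]_n) :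
  sym_psd A ->
  (forall k, gamma k != 0) ->
  CD_run A b gamma y r p m ->
  (m.+1 <= n)%N ->
  A *m ystar = b ->
  let f := fun z : 'cV[R]_n => 2^-1 * dotv (z - ystar) (A *m (z - ystar)) in
  let g := fun (i : nat) (z : 'cV[R]_n) =>
             2^-1 * dotv (z - y i) (A *m (z - y i)) in
  (* (1) *)
  ((0 < m)%N -> forall t : R,
     g 1%N (y 1%N + gamma 0%N *: (A *m p 0%N) - cd_sigma A gamma p 0%N *: p 0%N)
     <= g 1%N (y 1%N + gamma 0%N *: (A *m p 0%N) + t *: p 0%N))
  /\
  (* (2) *)
  (forall i, (2 <= i)%N -> (i <= m)%N -> forall s t : R,
     g i (y i + gamma i.-1 *: (A *m p i.-1)
            - cd_sigma A gamma p i.-1 *: p i.-1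
            - cd_omega A gamma p i.-1 *: p i.-2)
     <= g i (y i + gamma i.-1 *: (A *m p i.-1) + s *: p i.-1 + t *: p i.-2))
  /\
  (* (3) *)
  (forall i, (1 <= i)%N -> (i <= m)%N ->
     f (y i + cd_a A r p i *: p i)
     = f (y i) - 2^-1 * (gamma i.-1 / cd_a A r p i.-1) ^+ 2
                   * normv (r i) ^+ 4 / dotv (p i) (A *m p i))
  /\
  (* (4) *)
  (forall X : 'M[R]_n, is_MP_pinv A X ->
     (X - \sum_(i < m.+1) (dotv (p i) (A *m p i))^-1 *: (p i *m (p i)^T))
       *m r 0%N = 0).
Proof.
move=> psdA gamma_neq0 run _ ystarE f g; split; [|split; [|split]].
- exact: cd_line_min psdA gamma_neq0 run.
- move=> i; exact: (cd_plane_min (i := i) psdA gamma_neq0 run).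
- move=> i; exact: (cd_energy_decrease (i := i) psdA gamma_neq0 run ystarE).
- move=> X; exact: (cd_pinv_r0 (X := X) psdA gamma_neq0 run).
Qed.
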